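(* In the bootstrap setting, let $|\alpha|+|\beta|+|\sigma|\le10$. For every $\eta>0$ there is $C_\eta>0$ (depending on $\eta,d_0,\gamma$) such that for every $T\in[0,T_{\mathrm{boot}})$, $$T^{\alpha,\beta,\sigma}_2\le\eta\big\|(1+t)^{-\frac12-\frac\delta2}W_{\alpha,\beta,\sigma}D^{\alpha,\beta,\sigma}g\big\|^2_{L^2([0,T];L^2_xL^2_v)}+C_\eta\sum_{\substack{|\beta'|\le|\beta|,\ |\sigma'|\le|\sigma|\\|\beta'|+|\sigma'|\le|\beta|+|\sigma|-1}}\big\|(1+t)^{-\frac12-\frac\delta2}W_{\alpha,\beta',\sigma'}D^{\alpha,\beta',\sigma'}g\big\|^2_{L^2([0,T];L^2_xL^2_v)},$$ where $$T^{\alpha,\beta,\sigma}_2:=\sum_{\substack{|\beta'|\le|\beta|,\ |\sigma'|\le|\sigma|\\|\beta'|+|\sigma'|\le|\beta|+|\sigma|-1}}\Big\|\frac{1}{(1+t)^{1+\delta}}W^2_{\alpha,\beta,\sigma}|D^{\alpha,\beta,\sigma}g|\,|D^{\alpha,\beta',\sigma'}g|\Big\|_{L^1([0,T];L^1_xL^1_v)}.$$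
   Context: Notation: $\langle z\rangle=\sqrt{1+|z|^2}$; repeated lower-case indices summed over $\{1,2,3\}$. Multi-indices $\alpha,\beta,\sigma\in(\mathbb N\cup\{0\})^3$ with $|\alpha|=\sum\alpha_l$; sums over primed multi-indices run over all multi-indices satisfying the displayed constraints. $D^{\alpha,\beta,\sigma}=\partial_x^\alpha\partial_v^\beta Y^\sigma$ with $Y^\sigma=\prod_lY_l^{\sigma_l}$, $Y_l=(t+1)\partial_{x_l}+\partial_{v_l}$. $\nu_{\alpha,\beta,\sigma}=20-\frac32(|\alpha|+|\sigma|)-\frac12|\beta|$, $\omega_{\alpha,\beta,\sigma}=20-\frac32|\sigma|-\frac12(|\alpha|+|\beta|)$, $W_{\alpha,\beta,\sigma}=\langle v\rangle^{\nu_{\alpha,\beta,\sigma}}\langle x-(t+1)v\rangle^{\omega_{\alpha,\beta,\sigma}}$. Mixed norms take $v$ first, then $x$, then $t$. Bootstrap setting: fix $\gamma\in[0,1)$, $d_0>0$, $\delta\in(0,\frac18)$; $a_{ij}(z)=(\delta_{ij}-z_iz_j/|z|^2)|z|^{\gamma+2}$, $c=\partial^2_{z_iz_j}a_{ij}$, $\bar a_{ij}=\int a_{ij}(v-v_* )f(t,x,v_* )dv_*$, $\bar c=\int c(v-v_* )f(t,x,v_* )dv_*$; Landau equation $\partial_tf+v_i\partial_{x_i}f=\bar a_{ij}\partial^2_{v_iv_j}f-\bar cf$; $d(t)=d_0(1+(1+t)^{-\delta})$. Energy norm for $T>0$: $\|h\|^2_{E_T}=\sum_{|\alpha|+|\beta|+|\sigma|\le10}(1+T)^{-|\beta|(1+\delta)}\big(\|W_{\alpha,\beta,\sigma}D^{\alpha,\beta,\sigma}h\|^2_{L^\infty([0,T);L^2_xL^2_v)}+\|\langle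 v\rangle^{1/2}W_{\alpha,\beta,\sigma}D^{\alpha,\beta,\sigma}h\|^2_{L^2([0,T);L^2_xL^2_v)}\big)$. $\epsilon_0=\epsilon_0(d_0,\gamma)>0$ is a fixed sufficiently small constant, $\epsilon\in[0,\epsilon_0]$, and $f_{\mathrm{ini}}$ satisfies $\sum_{|\alpha|+|\beta|+|\sigma|\le10}\|\langle v\rangle^{20-\frac32|\alpha|-\frac12|\beta|-\frac32|\sigma|}\langle x-v\rangle^{20-\frac32|\sigma|-\frac12|\beta|-\frac12|\alpha|}\partial_x^\alpha\partial_v^\beta(\partial_x+\partial_v)^\sigma(e^{2d_0\langle v\rangle}f_{\mathrm{ini}})\|^2_{L^2_xL^2_v}<\epsilon$. $T_{\mathrm{boot}}>0$ and $f:[0,T_{\mathrm{boot}})\times\mathbb R^3\times\mathbb R^3\to\mathbb R$ is a (sufficiently regular) solution of the Landau equation with $f\ge0$, $f(0)=f_{\mathrm{ini}}$; $g=e^{d(t)\langle v\rangle}f$; and $\|g\|_{E_T}\le\epsilon^{3/4}$ for all $T\in[0,T_{\mathrm{boot}})$. $A\lesssim B$ means $A\le CB$ with $C$ depending only on $d_0,\gamma$. *)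

From HB Require Import structures.
From mathcomp Require Import all_boot all_order all_algebra.
From mathcomp Require Import all_classical all_reals all_analysis ess_sup_inf.
Set Implicit Arguments. Unset Strict Implicit. Unset Printing Implicit Defensive.
Import Order.TTheory GRing.Theory Num.Theory numFieldNormedType.Exports.
Local Open Scope classical_set_scope.
Local Open Scope ring_scope.

Section LandauDefs.
Context {R : realType}.

(* R^3, represented as R * R * R: it carries both the product normed-module
   structure (for derivatives) and the product measurable structure. *)
Definition V3 := (R * R * R)%type.

Definition i0 : 'I_3 := @Ordinal 3 0 isT.
Definition i1 : 'I_3 := @Ordinal 3 1 isT.
Definition i2 : 'I_3 := @Ordinal 3 2 isT.

Definition cmp (z : V3) (i : 'I_3) : R :=
  match val i with 0%N => z.1.1 | 1%N => z.1.2 | _ => z.2 end.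
Definition ev (i : 'I_3) : V3 :=
  (((val i == 0%N)%:R, (val i == 1%N)%:R), (val i == 2%N)%:R).
Definition enorm (z : V3) : R := Num.sqrt (\sum_(i < 3) cmp z i ^+ 2).
Definition jb (z : V3) : R := Num.sqrt (1 + enorm z ^+ 2).

Definition phasefun := R -> V3 -> V3 -> R.

Definition dx (l : 'I_3) (h : phasefun) : phasefun :=
  fun t x v => 'D_((ev l, 0) : V3 * V3) (fun p : V3 * V3 => h t p.1 p.2) (x, v).
Definition dv (l : 'I_3) (h : phasefun) : phasefun :=
  fun t x v => 'D_((0, ev l) : V3 * V3) (fun p : V3 * V3 => h t p.1 p.2) (x, v).
Definition Yf (l : 'I_3) (h : phasefun) : phasefun :=
  fun t x v => (t + 1) * dx l h t x v + dv l h t x v.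
Definition Zf (l : 'I_3) (h : phasefun) : phasefun :=
  fun t x v => dx l h t x v + dv l h t x v.

Definition mindex := 'I_3 -> nat.
Definition mabs (a : mindex) : nat := (\sum_(i < 3) a i)%N.
Definition mi_of (a : {ffun 'I_3 -> 'I_11}) : mindex := fun i => val (a i).

Definition opow (P : 'I_3 -> phasefun -> phasefun) (a : mindex) (h : phasefun)
  : phasefun :=
  iter (a i0) (P i0) (iter (a i1) (P i1) (iter (a i2) (P i2) h)).

Definition Dop (a b s : mindex) (h : phasefun) : phasefun :=
  opow dx a (opow dv b (opow Yf s h)).

Definition nu (a b s : mindex) : R :=
  20 - 3 / 2 * (mabs a + mabs s)%:R - 1 / 2 * (mabs b)%:R.
Definition om (a b s : mindex) : R :=
  20 - 3 / 2 * (mabs s)%:R - 1 / 2 * (mabs a + mabs b)%:R.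
Definition W (a b s : mindex) (t : R) (x v : V3) : R :=
  jb v `^ nu a b s * jb (x - (t + 1) *: v) `^ om a b s.

Definition leb3 := ((@lebesgue_measure R \x @lebesgue_measure R)
                      \x @lebesgue_measure R)%E.

Definition L2xv2 (F : V3 -> V3 -> R) : \bar R :=
  (\int[leb3]_x \int[leb3]_v ((F x v) ^+ 2)%:E)%E.
Definition L2T2 (T : R) (F : phasefun) : \bar R :=
  (\int[@lebesgue_measure R]_(t in `[0%R, T[) L2xv2 (F t))%E.
Definition Linf2 (T : R) (F : phasefun) : \bar R :=
  ess_sup (@lebesgue_measure R)
    (fun t : R => if (0 <= t < T)%R then L2xv2 (F t) else -oo)%E.

Definition Enorm2 (delta T : R) (h : phasefun) : \bar R :=
  (\sum_(a : {ffun 'I_3 -> 'I_11}) \sum_(b : {ffun 'I_3 -> 'I_11})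
   \sum_(s : {ffun 'I_3 -> 'I_11} |
          (mabs (mi_of a) + mabs (mi_of b) + mabs (mi_of s) <= 10)%N)
    ((1 + T) `^ (- (mabs (mi_of b))%:R * (1 + delta)))%:E *
    (Linf2 T (fun t x v => W (mi_of a) (mi_of b) (mi_of s) t x v *
                           Dop (mi_of a) (mi_of b) (mi_of s) h t x v)%R
     + L2T2 T (fun t x v => jb v `^ (1 / 2) * W (mi_of a) (mi_of b) (mi_of s) t x v *
                           Dop (mi_of a) (mi_of b) (mi_of s) h t x v)%R))%E.

Definition initial_small (d0 eps : R) (f_ini : V3 -> V3 -> R) : Prop :=
  (\sum_(a : {ffun 'I_3 -> 'I_11}) \sum_(b : {ffun 'I_3 -> 'I_11})
   \sum_(s : {ffun 'I_3 -> 'I_11} |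
          (mabs (mi_of a) + mabs (mi_of b) + mabs (mi_of s) <= 10)%N)
    L2xv2 (fun x v =>
      jb v `^ nu (mi_of a) (mi_of b) (mi_of s) *
      jb (x - v) `^ om (mi_of a) (mi_of b) (mi_of s) *
      opow dx (mi_of a) (opow dv (mi_of b) (opow Zf (mi_of s)
        (fun _ y w => expR (2 * d0 * jb w) * f_ini y w))) 0 x v)%R
   < eps%:E)%E.

Definition aij (gam : R) (i j : 'I_3) (z : V3) : R :=
  ((i == j)%:R - cmp z i * cmp z j / enorm z ^+ 2) * enorm z `^ (gam + 2).
Definition cL (gam : R) (z : V3) : R :=
  \sum_(i < 3) \sum_(j < 3) 'D_(ev i) ('D_(ev j) (aij gam i j)) z.
Definition abar (gam : R) (f : phasefun) (i j : 'I_3) (t : R) (x v : V3) : R :=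
  fine (\int[leb3]_w ((aij gam i j (v - w) * f t x w)%:E))%E.
Definition cbar (gam : R) (f : phasefun) (t : R) (x v : V3) : R :=
  fine (\int[leb3]_w ((cL gam (v - w) * f t x w)%:E))%E.

Definition landau_eq (gam Tboot : R) (f : phasefun) : Prop :=
  forall t x v, 0 < t < Tboot ->
    'D_1 (fun s => f s x v) t + \sum_(i < 3) cmp v i * dx i f t x v
    = \sum_(i < 3) \sum_(j < 3) abar gam f i j t x v * dv i (dv j f) t x v
      - cbar gam f t x v * f t x v.

Definition iterD (ds : seq (V3 * V3)) (F : V3 * V3 -> R) : V3 * V3 -> R :=
  foldr (fun d G => 'D_d G) F ds.

(* "sufficiently regular": smooth in (x,v), differentiable in t,
   and the coefficient integrals are Lebesgue integrable *)
Definition regular (gam Tboot : R) (f : phasefun) : Prop :=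
  [/\ (forall t, 0 <= t < Tboot -> forall ds p d,
         derivable (iterD ds (fun p : V3 * V3 => f t p.1 p.2)) p d),
      (forall t x v, 0 < t < Tboot -> derivable (fun s => f s x v) t 1) &
      (forall t x v, 0 <= t < Tboot ->
         (forall i j, leb3.-integrable setT
                        (fun w => (aij gam i j (v - w) * f t x w)%:E)) /\
         leb3.-integrable setT (fun w => (cL gam (v - w) * f t x w)%:E))].

Definition dfun (d0 delta t : R) : R := d0 * (1 + (1 + t) `^ (- delta)).
Definition gof (d0 delta : R) (f : phasefun) : phasefun :=
  fun t x v => expR (dfun d0 delta t * jb v) * f t x v.

Definition wL2 (delta T : R) (a b s : mindex) (h : phasefun) : \bar R :=
  (\int[@lebesgue_measure R]_(t in `[0%R, T])
     L2xv2 (fun x v => (1 + t) `^ (- (1 / 2) - delta / 2) * W a b s t x v *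
                       Dop a b s h t x v)%R)%E.

Definition primed (b s : mindex) (b' s' : {ffun 'I_3 -> 'I_11}) : bool :=
  [&& (mabs (mi_of b') <= mabs b)%N, (mabs (mi_of s') <= mabs s)%N &
      (mabs (mi_of b') + mabs (mi_of s') + 1 <= mabs b + mabs s)%N].

Definition T2 (delta T : R) (a b s : mindex) (h : phasefun) : \bar R :=
  (\sum_(b' : {ffun 'I_3 -> 'I_11}) \sum_(s' : {ffun 'I_3 -> 'I_11} | primed b s b' s')
    \int[@lebesgue_measure R]_(t in `[0%R, T])
      \int[leb3]_x \int[leb3]_v
        ((1 / ((1 + t) `^ (1 + delta)) * W a b s t x v ^+ 2 *
          `|Dop a b s h t x v| * `|Dop a (mi_of b') (mi_of s') h t x v|)%:E))%E.

End LandauDefs.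

From HB Require Import structures.
From mathcomp Require Import all_boot all_order all_algebra.
From mathcomp Require Import all_classical all_reals all_analysis ess_sup_inf.
From mathcomp Require Import measurable_realfun ring lra.
Set Implicit Arguments. Unset Strict Implicit. Unset Printing Implicit Defensive.
Import Order.TTheory GRing.Theory Num.Theory numFieldNormedType.Exports.
Local Open Scope classical_set_scope.
Local Open Scope ring_scope.

(* The weights
   W_{a,b,s} decrease when b and s grow, so for primed (b', s')
   W_{a,b,s}^2 |D g| |D' g| <= (W_{a,b,s} |D g|) (W_{a,b',s'} |D' g|), and
   (1+t)^{-1-delta} is the square of the time weight of the L^2 norms.
   Young's inequality u w <= e u^2 + w^2 / (4 e), with e = eta / N and N
   bounding the number of primed indices, then gives the claim term by term
   under the triple integral. *)

Lemma sigma_finite_product_measure1 d1 d2 (T1 : measurableType d1)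
    (T2 : measurableType d2) (R : realType) (m1 : {measure set T1 -> \bar R})
    (m2 : {sigma_finite_measure set T2 -> \bar R}) :
  sigma_finite setT m1 -> sigma_finite setT (m1 \x m2)%E.
Proof.
move=> /sigma_finiteP[F [TF ndF Ffin]].
have /sigma_finiteP[G [TG ndG Gfin]] := sigma_finiteT m2.
exists (fun n => F n `*` G n).
  apply/seteqP; split=> [[x y] _|]; last exact: subsetT.
  have [n _ Fx] : (\bigcup_n F n) x by rewrite -TF.
  have [k _ Gy] : (\bigcup_n G n) y by rewrite -TG.
  exists (maxn n k) => //; split=> /=.
  - exact: (subsetPset _ _ (ndF _ _ (leq_maxl n k))) _ Fx.
  - exact: (subsetPset _ _ (ndG _ _ (leq_maxr n k))) _ Gy.
move=> n; have [mFn Fnoo] := Ffin n; have [mGn Gnoo] := Gfin n.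
split; first exact: measurableX.
by rewrite product_measure1E // lte_mul_pinfty // ge0_fin_numE.
Qed.

(* [leb3] is a constant, hence invisible to instance inference: it must first
   inherit the measure structure of its body before being declared
   sigma-finite. *)
HB.instance Definition _ (R : realType) := Measure.on (@leb3 R).

Lemma sigma_finite_leb3 (R : realType) : sigma_finite setT (@leb3 R).
Proof.
do 2 apply: sigma_finite_product_measure1.
exact: sigma_finiteT.
Qed.

HB.instance Definition _ (R : realType) :=
  Measure_isSigmaFinite.Build _ _ _ (@leb3 R) (sigma_finite_leb3 R).

Section iterated_integral.
Local Open Scope ereal_scope.
Context d1 d2 (X : measurableType d1) (Y : measurableType d2) (R : realType).

Lemma ge0_le_integral_lincomb d (T : measurableType d)
    (mu : {measure set T -> \bar R}) (D : set T) (f g h : T -> \bar R)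
    (c k : R) :
  measurable D -> (0 <= c)%R -> (0 <= k)%R ->
  measurable_fun D f -> measurable_fun D g -> measurable_fun D h ->
  (forall x, D x -> 0 <= f x) -> (forall x, D x -> 0 <= g x) ->
  (forall x, D x -> 0 <= h x) ->
  (forall x, D x -> f x <= c%:E * g x + k%:E * h x) ->
  \int[mu]_(x in D) f x <=
    c%:E * \int[mu]_(x in D) g x + k%:E * \int[mu]_(x in D) h x.
Proof.
move=> mD c0 k0 mf mg mh f0 g0 h0 fgh.
have cg0 x : D x -> 0 <= c%:E * g x by move=> Dx; rewrite mule_ge0 ?g0.
have kh0 x : D x -> 0 <= k%:E * h x by move=> Dx; rewrite mule_ge0 ?h0.
have mcg := measurable_funeM c%:E mg; have mkh := measurable_funeM k%:E mh.
rewrite -!ge0_integralZl_EFin // -ge0_integralD //.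
by apply: ge0_le_integral => //; exact: emeasurable_funD.
Qed.

Variables (mu : {measure set X -> \bar R}) (nu : {sigma_finite_measure set Y -> \bar R}).

Definition iint3 (D : set X) (F : X * Y * Y -> R) : \bar R :=
  \int[mu]_(t in D) \int[nu]_x \int[nu]_v (F (t, x, v))%:E.

Section nonnegative_integrand.
Variable F : X * Y * Y -> R.
Hypotheses (mF : measurable_fun setT F) (F0 : forall p, (0 <= F p)%R).

Lemma measurable_fun_inner_integral :
  measurable_fun setT (fun tx : X * Y => \int[nu]_v (F (tx, v))%:E).
Proof.
apply: (measurable_fun_fubini_tonelli_F (m2 := nu) (fun p => (F p)%:E)).
  exact/measurable_EFinP.
by move=> p; rewrite lee_fin.
Qed.

Lemma measurable_fun_middle_integral :
  measurable_fun setT (fun t : X => \int[nu]_x \int[nu]_v (F (t, x, v))%:E).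
Proof.
apply: (measurable_fun_fubini_tonelli_F (m2 := nu) _ measurable_fun_inner_integral).
by move=> tx; apply: integral_ge0 => v _; rewrite lee_fin.
Qed.

End nonnegative_integrand.

Lemma iint3_le_lincomb (D : set X) (F G H : X * Y * Y -> R) (c k : R) :
  measurable D -> (0 <= c)%R -> (0 <= k)%R ->
  measurable_fun setT F -> measurable_fun setT G -> measurable_fun setT H ->
  (forall p, 0 <= F p)%R -> (forall p, 0 <= G p)%R -> (forall p, 0 <= H p)%R ->
  (forall t x v, D t -> F (t, x, v) <= c * G (t, x, v) + k * H (t, x, v))%R ->
  iint3 D F <= c%:E * iint3 D G + k%:E * iint3 D H.
Proof.
move=> mD c0 k0 mF mG mH F0 G0 H0 FGH.
have inner_ge0 (K : X * Y * Y -> R) tx : (forall p, 0 <= K p)%R ->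
    0 <= \int[nu]_v (K (tx, v))%:E.
  by move=> K0; apply: integral_ge0 => v _; rewrite lee_fin.
have middle_ge0 (K : X * Y * Y -> R) t : (forall p, 0 <= K p)%R ->
    0 <= \int[nu]_x \int[nu]_v (K (t, x, v))%:E.
  by move=> K0; apply: integral_ge0 => x _; exact: inner_ge0.
have msection (K : X * Y * Y -> R) t : measurable_fun setT K ->
    (forall p, 0 <= K p)%R ->
    measurable_fun setT (fun x => \int[nu]_v (K (t, x, v))%:E).
  move=> mK K0.
  have mpair : measurable_fun setT (fun x : Y => (t, x)) by exact: measurable_fun_pair.
  exact: measurableT_comp (measurable_fun_inner_integral mK K0) mpair.
have mpoint (K : X * Y * Y -> R) t x : measurable_fun setT K ->
    measurable_fun setT (fun v => (K (t, x, v))%:E).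
  move=> mK; apply/measurable_EFinP.
  have mpair : measurable_fun setT (fun v : Y => (t, x, v)) by exact: measurable_fun_pair.
  exact: measurableT_comp mK mpair.
apply: (ge0_le_integral_lincomb mu _ _ _
  (measurable_funTS (measurable_fun_middle_integral mF F0))
  (measurable_funTS (measurable_fun_middle_integral mG G0))
  (measurable_funTS (measurable_fun_middle_integral mH H0))) => // [t _|t _|t _|t Dt].
1-3: exact: middle_ge0.
apply: (ge0_le_integral_lincomb nu _ _ _ (msection F t mF F0) (msection G t mG G0)
  (msection H t mH H0)) => // [x _|x _|x _|x _].
1-3: exact: inner_ge0.
apply: (ge0_le_integral_lincomb nu _ _ _ (mpoint F t x mF) (mpoint G t x mG)
  (mpoint H t x mH)) => // [v _|v _|v _|v _]; rewrite lee_fin //.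
exact: FGH.
Qed.

End iterated_integral.

Section weights.
Variable R : realType.
Implicit Types (x v z : @V3 R) (t c : R) (a b s : mindex).

Lemma cmpBZ x v c i : cmp (x - c *: v) i = cmp x i - c * cmp v i.
Proof. by case: i => [[|[|[|k]]] Hk]. Qed.

Lemma measurable_cmp i : measurable_fun setT (fun z : @V3 R => cmp z i).
Proof.
case: i => [[|[|[|k]]] Hk] //=; rewrite /cmp /=.
- exact: measurableT_comp measurable_fst measurable_fst.
- exact: measurableT_comp measurable_snd measurable_fst.
- exact: measurable_snd.
Qed.

Lemma jb_ge1 z : 1 <= jb z.
Proof. by rewrite /jb -{1}sqrtr1 ler_sqrt ?lerDl ?addr_ge0 ?sqr_ge0. Qed.

Lemma jbE z : jb z = (1 + \sum_(i < 3) cmp z i ^+ 2) `^ 2^-1.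
Proof.
have sum_ge0 : 0 <= \sum_(i < 3) cmp z i ^+ 2 by apply: sumr_ge0 => i _; exact: sqr_ge0.
by rewrite /jb /enorm sqr_sqrtr // powR12_sqrt // addr_ge0.
Qed.

Lemma measurable_jb_comp d (T : measurableType d) (phi : T -> @V3 R) :
  (forall i, measurable_fun setT (fun p => cmp (phi p) i)) ->
  measurable_fun setT (fun p => jb (phi p)).
Proof.
move=> mphi; under eq_fun do rewrite jbE.
apply: measurableT_comp (measurable_powR _) _.
apply: measurable_funD; first exact: measurable_cst.
by apply: measurable_sum => i; exact: measurable_funX.
Qed.

Lemma measurable_W a b s :
  measurable_fun setT (fun p : R * @V3 R * @V3 R => W a b s p.1.1 p.1.2 p.2).
Proof.
apply: measurable_funM; apply: measurableT_comp (measurable_powR _) _;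
  apply: measurable_jb_comp => i.
  exact: measurableT_comp (measurable_cmp i) measurable_snd.
under eq_fun do rewrite cmpBZ.
apply: measurable_funB.
  exact: measurableT_comp (measurable_cmp i) (measurableT_comp measurable_snd measurable_fst).
apply: measurable_funM; last exact: measurableT_comp (measurable_cmp i) measurable_snd.
apply: measurable_funD; last exact: measurable_cst.
exact: measurableT_comp measurable_fst measurable_fst.
Qed.

Lemma W_ge0 a b s t x v : 0 <= W a b s t x v.
Proof. by rewrite /W mulr_ge0 // powR_ge0. Qed.

Lemma W_le a b s b' s' t x v : (mabs b' <= mabs b)%N -> (mabs s' <= mabs s)%N ->
  W a b s t x v <= W a b' s' t x v.
Proof.
rewrite -!(ler_nat R) => lebb' less'.
apply: ler_pM; rewrite ?powR_ge0 //; apply: ler_powR; rewrite ?jb_ge1 //.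
- by rewrite /nu !natrD; lra.
- by rewrite /om !natrD; lra.
Qed.

Lemma measurable_time_weight c :
  measurable_fun setT (fun p : R * @V3 R * @V3 R => (1 + p.1.1) `^ c).
Proof.
apply: measurableT_comp (measurable_powR _) _.
apply: measurable_funD; first exact: measurable_cst.
exact: measurableT_comp measurable_fst measurable_fst.
Qed.

Lemma inv_powR_sqr (y c : R) : c != 0 -> 1 / y `^ c = (y `^ (- c / 2)) ^+ 2.
Proof.
have halves : - c / 2 + - c / 2 = - c by field.
move=> c0; rewrite expr2 -powRD halves ?oppr_eq0 ?(negbTE c0) //.
by rewrite div1r powRN.
Qed.

End weights.

Section young.
Variable R : realFieldType.

Lemma mul_le_weighted_sqr (e u w : R) :
  0 < e -> u * w <= e * u ^+ 2 + (4 * e)^-1 * w ^+ 2.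
Proof.
move=> e0; rewrite -subr_ge0.
have -> : e * u ^+ 2 + (4 * e)^-1 * w ^+ 2 - u * w = (4 * e)^-1 * (2 * e * u - w) ^+ 2.
  by field; rewrite gt_eqF.
by rewrite mulr_ge0 ?sqr_ge0 // invr_ge0 mulr_ge0 // ltW.
Qed.

Lemma weighted_cross_term_le (e k W0 W1 D D' : R) : 0 < e -> 0 <= k -> 0 <= W0 <= W1 ->
  k ^+ 2 * W0 ^+ 2 * `|D| * `|D'| <=
  e * (k * W0 * D) ^+ 2 + (4 * e)^-1 * (k * W1 * D') ^+ 2.
Proof.
move=> e0 k0 /andP[W00 W01].
have sqr_norm (c y : R) : (c * y) ^+ 2 = (c * `|y|) ^+ 2.
  by rewrite !exprMn real_normK ?num_real.
rewrite [(k * W0 * D) ^+ 2]sqr_norm [(k * W1 * D') ^+ 2]sqr_norm.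
apply: le_trans (mul_le_weighted_sqr _ (k * W1 * `|D'|) e0).
have -> : k ^+ 2 * W0 ^+ 2 * `|D| * `|D'| = (k * W0 * `|D|) * (k * W0 * `|D'|) by ring.
by rewrite ler_wpM2l ?mulr_ge0 // ler_wpM2r // ler_wpM2l.
Qed.

End young.

Section finite_sums.
Local Open Scope ereal_scope.

Lemma sume_cst_le (R : realType) (I J : finType) (P : I -> J -> bool) (c : R)
    (X : \bar R) : (0 <= c)%R -> 0 <= X ->
  \sum_(i : I) \sum_(j : J | P i j) (c%:E * X)
   <= (c * (#|I| * #|J|)%:R)%:E * X.
Proof.
move=> c0 X0.
under eq_bigr do rewrite -ge0_sume_distrl //.
rewrite -ge0_sume_distrl; last by move=> i _; apply: sume_ge0 => j _; rewrite lee_fin.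
apply: lee_wpmul2r => //.
under eq_bigr => i _ do rewrite sumEFin.
rewrite sumEFin lee_fin.
apply: (@le_trans _ _ (\sum_(i : I) \sum_(j : J) c)%R).
  apply: ler_sum => i _; rewrite big_mkcond /=; apply: ler_sum => j _.
  by case: ifP.
by rewrite !sumr_const -mulrnA mulr_natr mulnC.
Qed.

End finite_sums.

Section T2_estimate.
Variables (R : realType) (delta T : R) (h : @phasefun R).
Hypothesis delta_neq : 1 + delta != 0.
Hypothesis mDop : forall a b s : mindex, measurable_fun setT
  (fun p : R * @V3 R * @V3 R => Dop a b s h p.1.1 p.1.2 p.2).

Let time_weight (p : R * @V3 R * @V3 R) := (1 + p.1.1) `^ (- (1 / 2) - delta / 2).

Let weighted_Dop a b s (p : R * @V3 R * @V3 R) :=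
  time_weight p * W a b s p.1.1 p.1.2 p.2 * Dop a b s h p.1.1 p.1.2 p.2.

Let T2_integrand a b s b' s' (p : R * @V3 R * @V3 R) :=
  1 / (1 + p.1.1) `^ (1 + delta) * W a b s p.1.1 p.1.2 p.2 ^+ 2 *
  `|Dop a b s h p.1.1 p.1.2 p.2| * `|Dop a b' s' h p.1.1 p.1.2 p.2|.

Let T2_integrandE a b s b' s' : T2_integrand a b s b' s' = fun p =>
  time_weight p ^+ 2 * W a b s p.1.1 p.1.2 p.2 ^+ 2 *
  `|Dop a b s h p.1.1 p.1.2 p.2| * `|Dop a b' s' h p.1.1 p.1.2 p.2|.
Proof.
apply/funext => p; rewrite /T2_integrand inv_powR_sqr //.
by congr (_ `^ _ ^+ 2 * _ * _ * _); field.
Qed.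

Let measurable_weighted_Dop_sqr a b s :
  measurable_fun setT (fun p => weighted_Dop a b s p ^+ 2).
Proof.
apply: measurable_funX; apply: measurable_funM (mDop _ _ _).
exact: measurable_funM (measurable_time_weight _) (measurable_W _ _ _).
Qed.

Lemma T2_term_le a b s b' s' (e : R) :
  0 < e -> (mabs b' <= mabs b)%N -> (mabs s' <= mabs s)%N ->
  (\int[lebesgue_measure]_(t in `[0%R, T]) \int[leb3]_x \int[leb3]_v
     ((1 / ((1 + t) `^ (1 + delta)) * W a b s t x v ^+ 2 *
       `|Dop a b s h t x v| * `|Dop a b' s' h t x v|)%:E)
   <= e%:E * wL2 delta T a b s h + ((4 * e)^-1)%:E * wL2 delta T a b' s' h)%E.
Proof.
move=> e0 lebb' less'.
apply: (iint3_le_lincomb lebesgue_measure leb3 (F := T2_integrand a b s b' s')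
  (G := fun p => weighted_Dop a b s p ^+ 2)
  (H := fun p => weighted_Dop a b' s' p ^+ 2)) => //.
- by rewrite ltW.
- by rewrite invr_ge0 mulr_ge0 // ltW.
- rewrite T2_integrandE.
  have mnormD a1 b1 s1 : measurable_fun setT
      (fun p : R * V3 * V3 => `|Dop a1 b1 s1 h p.1.1 p.1.2 p.2|).
    exact: measurableT_comp (@normr_measurable R setT) (mDop _ _ _).
  apply: measurable_funM (mnormD _ _ _); apply: measurable_funM (mnormD _ _ _).
  exact: measurable_funM (measurable_funX _ (measurable_time_weight _))
    (measurable_funX _ (measurable_W _ _ _)).
- exact: measurable_weighted_Dop_sqr.
- exact: measurable_weighted_Dop_sqr.
- by move=> p; rewrite !mulr_ge0 ?sqr_ge0 ?invr_ge0 ?powR_ge0.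
- by move=> p; exact: sqr_ge0.
- by move=> p; exact: sqr_ge0.
move=> t x v _; rewrite T2_integrandE.
by apply: weighted_cross_term_le; rewrite ?powR_ge0 ?W_ge0 ?W_le.
Qed.

Lemma wL2_ge0 a b s : (0 <= wL2 delta T a b s h)%E.
Proof.
apply: integral_ge0 => t _; apply: integral_ge0 => x _.
by apply: integral_ge0 => v _; rewrite lee_fin sqr_ge0.
Qed.

Lemma T2_le a b s (e : R) : 0 < e ->
  (T2 delta T a b s h
   <= (e * (#|{ffun 'I_3 -> 'I_11}| * #|{ffun 'I_3 -> 'I_11}|)%:R)%:E
        * wL2 delta T a b s h
      + ((4 * e)^-1)%:E *
        \sum_(b' : {ffun 'I_3 -> 'I_11})
          \sum_(s' : {ffun 'I_3 -> 'I_11} | primed b s b' s')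
            wL2 delta T a (mi_of b') (mi_of s') h)%E.
Proof.
move=> e0; rewrite /T2.
apply: (@le_trans _ _ (\sum_(b' : {ffun 'I_3 -> 'I_11})
    \sum_(s' : {ffun 'I_3 -> 'I_11} | primed b s b' s')
      (e%:E * wL2 delta T a b s h
       + ((4 * e)^-1)%:E * wL2 delta T a (mi_of b') (mi_of s') h))%E).
  apply: lee_sum => b' _; apply: lee_sum => s' /and3P[lebb' less' _].
  exact: T2_term_le.
under eq_bigr => b' _ do rewrite big_split /=.
rewrite big_split /= ge0_sume_distrr; last first.
  by move=> b' _; apply: sume_ge0 => s' _; exact: wL2_ge0.
under [X in (_ <= _ + X)%E]eq_bigr => b' _ do
  [rewrite ge0_sume_distrr; last by move=> s' _; exact: wL2_ge0].
by rewrite leeD2r // sume_cst_le // ?(ltW e0) ?wL2_ge0.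
Qed.

End T2_estimate.

Theorem proposition7p3 (R : realType) (gam d0 : R) :
  0 <= gam < 1 -> 0 < d0 ->
  exists eps0 : R, 0 < eps0 /\
  forall eta : R, 0 < eta -> exists Ceta : R, 0 < Ceta /\
  forall (a b s : @mindex), (mabs a + mabs b + mabs s <= 10)%N ->
  forall (delta eps Tboot : R) (f_ini : V3 -> V3 -> R) (f : phasefun),
    0 < delta < 1 / 8 ->
    0 <= eps <= eps0 ->
    initial_small d0 eps f_ini ->
    0 < Tboot ->
    regular gam Tboot f ->
    (forall a' b' s' : mindex, measurable_fun setT
       (fun p : R * V3 * V3 => Dop a' b' s' (gof d0 delta f) p.1.1 p.1.2 p.2)) ->
    (forall t x v, 0 <= t < Tboot -> 0 <= f t x v) ->
    (forall x v, f 0 x v = f_ini x v) ->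
    landau_eq gam Tboot f ->
    (forall T, 0 <= T < Tboot ->
       (Enorm2 delta T (gof d0 delta f) <= ((eps `^ (3 / 4)) ^+ 2)%:E)%E) ->
    forall T, 0 <= T < Tboot ->
      (T2 delta T a b s (gof d0 delta f)
       <= eta%:E * wL2 delta T a b s (gof d0 delta f)
          + Ceta%:E *
            \sum_(b' : {ffun 'I_3 -> 'I_11})
              \sum_(s' : {ffun 'I_3 -> 'I_11} | primed b s b' s')
                 wL2 delta T a (mi_of b') (mi_of s') (gof d0 delta f))%E.
Proof.
move=> _ _; exists 1; split=> // eta eta0.
have index_pairs_gt0 : 0 < (#|{ffun 'I_3 -> 'I_11}| * #|{ffun 'I_3 -> 'I_11}|)%:R :> R.
  by rewrite ltr0n muln_gt0 andbb; apply/card_gt0P; exists [ffun => ord0].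
set N := (_ * _)%:R in index_pairs_gt0.
have e0 : 0 < eta / N by rewrite divr_gt0.
exists (4 * (eta / N))^-1; split; first by rewrite invr_gt0 mulr_gt0.
move=> a b s _ delta eps Tboot f_ini f /andP[delta0 _] _ _ _ _ mDop _ _ _ _ T _.
have delta_neq : 1 + delta != 0 by apply: lt0r_neq0; lra.
by have := T2_le T delta_neq mDop a b s e0; rewrite divfK ?gt_eqF.
Qed.
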